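(* Let $r\geq 3$ and $k\geq 2$, and let $G$ be a $\mathcal{G}^{(r)}_k$-free $r$-graph. Then every maximal connected subgraph of $G$ (i.e. every element of the partition $\mathcal{M}_{1}$ of $E(G)$ into maximal connected subgraphs) is an $m$-tree for some $m\in\{1,\dots,k-1\}$.
   Context: An $r$-graph is an $r$-uniform hypergraph, identified with its edge set. An $(s,k)$-configuration is an $r$-graph with exactly $k$ edges and at most $s$ vertices. $\mathcal{G}^{(r)}_k$ is the family of all $r$-graphs that are either $(rk-2k+2,k)$-configurations or $(r\ell-2\ell+1,\ell)$-configurations for some $\ell\in\{2,\dots,k-1\}$; $\mathcal{G}^{(r)}_k$-free means containing no member of this family as a subgraph. An $r$-graph $F$ is connected if for any two edges $X,Y$ of $F$ there is a sequence of edges $X=X_1,\dots,X_m=Y$ of $F$ with $|X_i\cap X_{i+1}|\ge2$ for all $i$. A $1$-tree is an $r$-graph with a single edge; for $i\geq2$ an $i$-tree is an $r$-graph obtained from an $(i-1)$-tree $T$ by adding a new edge consisting of a pair of vertices contained together in some edge of $T$ and $r-2$ new vertices not in $T$. *)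

From mathcomp Require Import all_boot.
Set Implicit Arguments. Unset Strict Implicit. Unset Printing Implicit Defensive.

(* An r-graph on a finite vertex type T is identified with its edge set. *)
Section Hyper.
Context {T : finType}.

Definition is_rgraph (r : nat) (G : {set {set T}}) : Prop :=
  forall e, e \in G -> #|e| = r.

Definition verts (F : {set {set T}}) : {set T} := \bigcup_(e in F) e.

Definition config (s k : nat) (F : {set {set T}}) : Prop :=
  #|F| = k /\ #|verts F| <= s.

Definition in_Gfam (r k : nat) (F : {set {set T}}) : Prop :=
  is_rgraph r F /\
  (config (r * k - 2 * k + 2) k F \/
   exists l, 2 <= l <= k - 1 /\ config (r * l - 2 * l + 1) l F).

Definition Gfree (r k : nat) (G : {set {set T}}) : Prop :=
  forall F : {set {set T}}, F \subset G -> ~ in_Gfam r k F.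

Definition adj2 (F : {set {set T}}) : rel {set T} :=
  fun X Y => [&& X \in F, Y \in F & 1 < #|X :&: Y|].

Definition connectedH (F : {set {set T}}) : Prop :=
  forall X Y, X \in F -> Y \in F -> connect (adj2 F) X Y.

Definition max_connected (G M : {set {set T}}) : Prop :=
  [/\ M \subset G, M != set0, connectedH M &
      forall M' : {set {set T}}, M \subset M' -> M' \subset G -> connectedH M' -> M' = M].

Inductive is_tree (r : nat) : nat -> {set {set T}} -> Prop :=
| tree1 (e : {set T}) : #|e| = r -> is_tree r 1 [set e]
| treeS i (Tr : {set {set T}}) (X : {set T}) (u v : T) (N : {set T}) :
    is_tree r i Tr -> X \in Tr -> u \in X -> v \in X -> u != v ->
    #|N| = r - 2 -> [disjoint N & verts Tr] ->
    is_tree r i.+1 (Tr :|: [set u |: (v |: N)]).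

End Hyper.

(* A connected r-graph can be built up one edge at a time, each new edge
   meeting the edges so far in at least two vertices; every step adds at
   most r - 2 vertices, so n of the edges span at most (r-2)n + 2 vertices,
   with equality exactly when every new edge meets the previous vertices in
   exactly two, i.e. when the edges form an n-tree.  In a G^(r)_k-free graph
   a connected component with k edges would contain a (rk-2k+2, k)-
   configuration, and a component with 2 <= l < k edges that is not a tree
   would be an (rl-2l+1, l)-configuration. *)

From mathcomp Require Import all_boot.
From mathcomp Require Import zify.

Set Implicit Arguments.
Unset Strict Implicit.
Unset Printing Implicit Defensive.

Lemma connect_exit (T : finType) (e : rel T) (S : {set T}) x y :
  connect e x y -> x \in S -> y \notin S ->
  exists a b, [/\ a \in S, b \notin S & e a b].
Proof.
move/connectP=> [p e_p ->].
elim: p x e_p => [|z p IHp] x /= e_p Sx Sy; first by rewrite Sx in Sy.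
case/andP: e_p => exz e_p.
case: (boolP (z \in S)) => Sz; first exact: IHp Sz Sy.
by exists x, z.
Qed.

Section Hypergraph.
Variable T : finType.
Implicit Types (S M G : {set {set T}}) (e a : {set T}).

Lemma verts_setU1 e S : verts (e |: S) = e :|: verts S.
Proof. by rewrite /verts bigcup_setU big_set1. Qed.

Lemma sub_verts a S : a \in S -> a \subset verts S.
Proof. exact: bigcup_sup. Qed.

Lemma card_verts_setU1 e S :
  #|verts (e |: S)| + #|e :&: verts S| = #|e| + #|verts S|.
Proof. by rewrite verts_setU1 cardsUI. Qed.

Lemma is_rgraph_sub r S G : S \subset G -> is_rgraph r G -> is_rgraph r S.
Proof. by move=> /subsetP SG rG e /SG; apply: rG. Qed.

Lemma connectedH_exit M S :
  connectedH M -> S \subset M -> S != set0 -> ~~ (M \subset S) ->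
  exists a e, [/\ a \in S, e \in M, e \notin S & 1 < #|a :&: e|].
Proof.
move=> cM /subsetP SM /set0Pn[x Sx] /subsetPn[y My Sy].
have [a [e [Sa Se /and3P[_ Me ae]]]] := connect_exit (cM _ _ (SM _ Sx) My) Sx Sy.
by exists a, e.
Qed.

Lemma is_tree_setU1 r n S a e :
  is_tree r n S -> a \in S -> #|e| = r -> 1 < #|a :&: e| ->
  #|e :&: verts S| = 2 -> is_tree r n.+1 (e |: S).
Proof.
move=> tS Sa er ae eV2.
have a_eV : a :&: e = e :&: verts S.
  apply/eqP; rewrite eqEcard eV2 ae andbT setIC.
  exact/setIS/sub_verts.
have /cards2P[u [v [uv eV]]] : #|e :&: verts S| == 2 by rewrite eV2.
have /setIP[au _] : u \in a :&: e by rewrite a_eV eV !inE eqxx.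
have /setIP[av _] : v \in a :&: e by rewrite a_eV eV !inE eqxx orbT.
have -> : e = u |: (v |: (e :\: verts S)).
  by apply/setP => x; rewrite -[in LHS](setID e (verts S)) eV !inE orbA.
rewrite setUC; apply: (treeS tS Sa au av uv).
  by rewrite -er -(cardsID (verts S) e) eV2 addKn.
by rewrite -setI_eq0 setIDAC setDIl setDv setI0.
Qed.

Section Growth.
Variables (r : nat) (M : {set {set T}}).
Hypotheses (r_ge2 : 2 <= r) (rM : is_rgraph r M) (cM : connectedH M).

Lemma connected_grow n : 0 < n <= #|M| ->
  exists2 S : {set {set T}}, S \subset M &
    [/\ #|S| = n, #|verts S| <= (r - 2) * n + 2
      & #|verts S| = (r - 2) * n + 2 -> is_tree r n S].
Proof.
elim: n => [//|[|n] IHn] /andP[_ nM].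
  have /set0Pn[e Me] : M != set0 by rewrite -card_gt0.
  have er := rM Me.
  exists [set e]; first by rewrite sub1set.
  rewrite cards1 /verts big_set1 er muln1 subnK //; split=> // _.
  by rewrite -er; apply: tree1.
have [|S SM [Sn SV tS]] := IHn; first lia.
have [a [e [Sa Me Se ae]]] : exists a e, [/\ a \in S, e \in M, e \notin S & 1 < #|a :&: e|].
  apply: connectedH_exit SM _ _ => //; first by rewrite -card_gt0 Sn.
  by apply/negP => /subset_leq_card; rewrite Sn; lia.
have er := rM Me.
have ae_eV : #|a :&: e| <= #|e :&: verts S|.
  by rewrite setIC; apply/subset_leq_card/setIS/sub_verts.
have cardV := card_verts_setU1 e S.
exists (e |: S); first by rewrite subUset sub1set Me.
rewrite cardsU1 Se Sn; split=> //; first by lia.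
rewrite mulnSr => eq_V; apply: (is_tree_setU1 _ Sa er ae); last by lia.
by apply: tS; lia.
Qed.

End Growth.

Section Free.
Variables (r k : nat) (G : {set {set T}}).
Hypotheses (rG : is_rgraph r G) (fG : Gfree r k G).

Lemma Gfree_card_verts_k S : S \subset G -> #|S| = k ->
  (r - 2) * k + 2 < #|verts S|.
Proof.
move=> SG Sk; rewrite ltnNge; apply/negP => SV.
apply: (fG SG); split; first exact: is_rgraph_sub rG.
by left; split; rewrite // -mulnBl.
Qed.

Lemma Gfree_card_verts_lt_k S : S \subset G -> 2 <= #|S| <= k - 1 ->
  (r - 2) * #|S| + 1 < #|verts S|.
Proof.
move=> SG Sl; rewrite ltnNge; apply/negP => SV.
apply: (fG SG); split; first exact: is_rgraph_sub rG.
by right; exists #|S|; split; rewrite // -mulnBl.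
Qed.

End Free.

End Hypergraph.

Theorem lemma5p4 (T : finType) (r k : nat) (G : {set {set T}}) :
  3 <= r -> 2 <= k -> is_rgraph r G -> Gfree r k G ->
  forall M, max_connected G M ->
  exists m, 1 <= m <= k - 1 /\ is_tree r m M.
Proof.
move=> r_ge3 k_ge2 rG fG M [MG M0 cM _].
have r_ge2 : 2 <= r by rewrite ltnW.
have rM := is_rgraph_sub MG rG.
have M_gt0 : 0 < #|M| by rewrite card_gt0.
have Mk : #|M| <= k - 1.
  rewrite leqNgt; apply/negP => kM.
  have [|S SM [Sk SV _]] := connected_grow r_ge2 rM cM (n := k); first lia.
  have := Gfree_card_verts_k rG fG (subset_trans SM MG) Sk; lia.
have [|S SM [SMn SV tS]] := connected_grow r_ge2 rM cM (n := #|M|).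
  by rewrite M_gt0 leqnn.
have eq_SM : S = M by apply/eqP; rewrite eqEcard SM SMn leqnn.
subst S; clear SM SMn.
exists #|M|; split; first by lia.
apply: tS; apply/eqP; rewrite eqn_leq SV /=.
case: (ltnP 1 #|M|) => [M_gt1 | M_le1].
  have M_range : 2 <= #|M| <= k - 1 by lia.
  by move: (Gfree_card_verts_lt_k rG fG MG M_range); rewrite addn1 addn2.
have /cards1P[e eM] : #|M| == 1 by lia.
have er : #|e| = r by apply: rM; rewrite eM set11.
by rewrite eM cards1 /verts big_set1 er muln1 subnK.
Qed.
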